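(* Let $\|\cdot\|$ be a norm on (linear maps generated by) quantum operations which is sub-multiplicative, i.e. $\|\Theta_1\circ\Theta_2\|\le\|\Theta_1\|\|\Theta_2\|$, and sub-multiplicative with respect to tensor products, i.e. $\|\Theta_1\otimes\Theta_2\|\le\|\Theta_1\|\|\Theta_2\|$, for all $\Theta_1,\Theta_2$. Suppose $\|\Phi\|\le 1$ for every detection-incoherent operation $\Phi$. Then the functional $$M(\Theta)=\min_{\Phi\in\mathcal{DI}}\|\Delta\Theta-\Delta\Phi\|,$$ where the minimum runs over detection-incoherent operations with the same input and output systems as $\Theta$, is a measure in the detection-incoherent setting.
   Context: Every finite-dimensional system carries a fixed orthonormal incoherent basis $\{|i\rangle\}$; composite systems use the product basis. The total dephasing map is $\Delta(\rho)=\sum_i|i\rangle\langle i|\rho|i\rangle\langle i|$ (on composite systems the tensor product of the dephasing maps of the subsystems). A quantum operation is a completely positive trace-preserving linear map between finite-dimensional matrix spaces; compositions are written without $\circ$. A quantum operation $\Phi$ is detection-incoherent ($\Phi\in\mathcal{DI}$) iff $\Delta\Phi=\Delta\Phi\Delta$. In the detection-incoherent setting, the free operations are the detection-incoherent ones, and a super-operation is free iff it is a finite composition of elemental super-operations $\Theta\mapsto\Phi\circ\Theta$, $\Theta\mapsto\Theta\circ\Phi$, $\Theta\mapsto\Theta\otimes\Phi$, $\Theta\mapsto\Phi\otimes\Theta$ with $\Phi$ free (dimensions matching). A measure is a functional $M$ from quantum operations to $[0,\infty)$ such that (i) $M(\Theta)=0$ iff $\Theta$ is free; (ii) $M(\mathcal{F}[\Theta])\le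 M(\Theta)$ for all $\Theta$ and all free super-operations $\mathcal{F}$; (iii) $M$ is convex: $M(t\Theta+(1-t)\Psi)\le tM(\Theta)+(1-t)M(\Psi)$ for $t\in[0,1]$ and $\Theta,\Psi$ with the same input and output systems. *)

From HB Require Import structures.
From mathcomp Require Import all_boot all_order all_algebra.
From mathcomp Require Import complex mxtens.
From mathcomp Require Import classical_sets reals.

Set Implicit Arguments.
Unset Strict Implicit.
Unset Printing Implicit Defensive.

Import Order.TTheory GRing.Theory Num.Theory.
Local Open Scope ring_scope.
Local Open Scope classical_set_scope.

(* A finite-dimensional system is identified with its dimension n; its
   incoherent basis is the standard basis of C^n.  The composite of systems of
   dimensions m and n is the system of dimension m*n, whose standard basis is
   the product basis via mxtens_index : 'I_m * 'I_n -> 'I_(m*n). *)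

(* Linear maps 'M_m -> 'M_n (super-operators), represented by their matrix
   acting on row-vectorised matrices (mxvec). *)
Definition superop (R : realType) (m n : nat) := 'M[R[i]]_(m * m, n * n).

Definition soapp {R : realType} {m n : nat} (T : superop R m n) (X : 'M[R[i]]_m)
  : 'M[R[i]]_n := vec_mx (mxvec X *m T).

(* composition  T1 o T2  (T2 applied first) *)
Definition socomp {R : realType} {m n k : nat}
  (T1 : superop R n k) (T2 : superop R m n) : superop R m k := T2 *m T1.

(* tensor product of super-operators: the linear map sending
   A (x) B to T1(A) (x) T2(B) *)
Definition sotens {R : realType} {m1 n1 m2 n2 : nat}
  (T1 : superop R m1 n1) (T2 : superop R m2 n2) : superop R (m1 * m2) (n1 * n2) :=
  lin_mx (fun X : 'M[R[i]]_(m1 * m2) =>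
    \sum_(i < m1) \sum_(j < m1) \sum_(k < m2) \sum_(l < m2)
      X (mxtens_index (i, k)) (mxtens_index (j, l)) *:
        (soapp T1 (delta_mx i j) *t soapp T2 (delta_mx k l))).

Definition soid (R : realType) (n : nat) : superop R n n := 1%:M.

Definition dephase (R : realType) (n : nat) : superop R n n :=
  lin_mx (fun X : 'M[R[i]]_n => diag_mx (\row_i X i i)).

Definition psdmx {R : realType} {n : nat} (A : 'M[R[i]]_n) : Prop :=
  forall x : 'cV[R[i]]_n, 0 <= ((map_mx Num.conj x)^T *m A *m x) 0 0.

Definition positive_map {R : realType} {m n : nat} (T : superop R m n) : Prop :=
  forall X : 'M[R[i]]_m, psdmx X -> psdmx (soapp T X).

Definition completely_positive {R : realType} {m n : nat} (T : superop R m n)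
  : Prop := forall k : nat, positive_map (sotens (soid R k) T).

Definition trace_preserving {R : realType} {m n : nat} (T : superop R m n)
  : Prop := forall X : 'M[R[i]]_m, \tr (soapp T X) = \tr X.

Definition quantum_op {R : realType} {m n : nat} (T : superop R m n) : Prop :=
  completely_positive T /\ trace_preserving T.

Definition DI {R : realType} {m n : nat} (P : superop R m n) : Prop :=
  quantum_op P /\
  socomp (dephase R n) P = socomp (socomp (dephase R n) P) (dephase R m).

Definition in_qspan {R : realType} {m n : nat} (T : superop R m n) : Prop :=
  exists (k : nat) (c : 'I_k -> R[i]) (P : 'I_k -> superop R m n),
    (forall i, quantum_op (P i)) /\ T = \sum_(i < k) c i *: P i.

Definition norm_on_qspan {R : realType} {m n : nat} (nrm : superop R m n -> R)
  : Prop :=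
  (forall x, in_qspan x -> 0 <= nrm x) /\
  (forall x, in_qspan x -> nrm x = 0 -> x = 0) /\
  (forall (a : R[i]) x, in_qspan x -> nrm (a *: x) = Normc.normc a * nrm x) /\
  (forall x y, in_qspan x -> in_qspan y -> nrm (x + y) <= nrm x + nrm y).

Inductive free_superop {R : realType} :
  forall m n m' n' : nat, (superop R m n -> superop R m' n') -> Prop :=
| FS_post m n k (P : superop R n k) : DI P ->
    @free_superop R m n m k (fun T => socomp P T)
| FS_pre m n k (P : superop R k m) : DI P ->
    @free_superop R m n k n (fun T => socomp T P)
| FS_tensr m n k l (P : superop R k l) : DI P ->
    @free_superop R m n (m * k) (n * l) (fun T => sotens T P)
| FS_tensl m n k l (P : superop R k l) : DI P ->
    @free_superop R m n (k * m) (l * n) (fun T => sotens P T)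
| FS_comp m n m' n' m'' n'' (F : superop R m n -> superop R m' n')
    (G : superop R m' n' -> superop R m'' n'') :
    @free_superop R m n m' n' F -> @free_superop R m' n' m'' n'' G ->
    @free_superop R m n m'' n'' (fun T => G (F T)).

Definition DI_measure {R : realType} (M : forall m n : nat, superop R m n -> R)
  : Prop :=
  (forall m n (T : superop R m n), quantum_op T -> 0 <= M m n T) /\
  (forall m n (T : superop R m n), quantum_op T -> (M m n T = 0 <-> DI T)) /\
  (forall m n m' n' (F : superop R m n -> superop R m' n') (T : superop R m n),
      free_superop F -> quantum_op T -> M m' n' (F T) <= M m n T) /\
  (forall m n (T S : superop R m n) (t : R), 0 <= t <= 1 ->
      quantum_op T -> quantum_op S ->
      M m n (t%:C%C *: T + (1 - t)%:C%C *: S) <= t * M m n T + (1 - t) * M m n S).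

Definition dist_DI {R : realType} (nrm : forall m n : nat, superop R m n -> R)
  (m n : nat) (T : superop R m n) : R :=
  inf [set nrm m n (socomp (dephase R n) T - socomp (dephase R n) P)
      | P in [set P : superop R m n | DI P]].

(* M(T) = inf_{P in DI} ||Delta T - Delta P|| is a minimum: in real
   coordinates the DI operations form a compact set (cut out by linear
   conditions, and bounded because the Choi matrix of a quantum operation on an
   m-dimensional system is positive semidefinite with trace m), and the
   objective is Lipschitz on it, since on the span of the quantum operations the
   norm is dominated by the coordinate norm.  M vanishes exactly on DI: from
   Delta T = Delta P and Delta P = Delta P Delta we get Delta T = Delta T Delta.
   Monotonicity: if P is optimal for T and Phi is DI, then Phi P, P Phi,
   P (x) Phi and Phi (x) P are DI, and Delta Phi = Delta Phi Delta together with
   Delta = Delta (x) Delta turns Delta (Phi T) - Delta (Phi P) into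
   (Delta Phi) o (Delta T - Delta P), and similarly in the other cases; sub-
   multiplicativity and ||Delta Phi|| <= 1 conclude.  Convexity: the same convex
   combination of optimal DI operations is DI. *)

From HB Require Import structures.
From mathcomp Require Import all_boot all_order all_algebra.
From mathcomp Require Import complex mxtens.
From mathcomp Require Import classical_sets reals.
From mathcomp Require boolp topology normedtype derive.
From mathcomp Require Import ring lra.
Import Order.TTheory GRing.Theory Num.Theory.
Local Open Scope ring_scope.

Set Implicit Arguments.
Unset Strict Implicit.
Unset Printing Implicit Defensive.

Section MatrixTensor.
Variable K : comPzRingType.

Lemma lin_mx_app m1 n1 m2 n2 (f : 'M[K]_(m1, n1) -> 'M[K]_(m2, n2)) :
  linear f -> forall X, vec_mx (mxvec X *m lin_mx f) = f X.
Proof.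
move=> fl; pose F : {linear _ -> _} := HB.pack f (GRing.isLinear.Build _ _ _ _ f fl).
exact: (mx_vec_lin F).
Qed.

Lemma tensmxPl m n p q a (A B : 'M[K]_(m, n)) (D : 'M[K]_(p, q)) :
  (a *: A + B) *t D = a *: (A *t D) + B *t D.
Proof. by apply/matrixP => i j; rewrite !mxE mulrDl mulrA. Qed.

Lemma tensmxPr m n p q a (A : 'M[K]_(m, n)) (B D : 'M[K]_(p, q)) :
  A *t (a *: B + D) = a *: (A *t B) + A *t D.
Proof. by apply/matrixP => i j; rewrite !mxE mulrDr mulrCA. Qed.

Lemma tensmxZl m n p q a (A : 'M[K]_(m, n)) (D : 'M[K]_(p, q)) :
  (a *: A) *t D = a *: (A *t D).
Proof. by rewrite -[_ *: A]addr0 tensmxPl tens0mx addr0. Qed.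

Lemma tensmxZr m n p q a (A : 'M[K]_(m, n)) (D : 'M[K]_(p, q)) :
  A *t (a *: D) = a *: (A *t D).
Proof. by rewrite -[_ *: D]addr0 tensmxPr tensmx0 addr0. Qed.

Lemma tensmx_suml m n p q I (r : seq I) (P : pred I) (F : I -> 'M[K]_(m, n))
    (D : 'M[K]_(p, q)) :
  (\sum_(i <- r | P i) F i) *t D = \sum_(i <- r | P i) (F i *t D).
Proof.
have tensDl (A B : 'M[K]_(m, n)) : (A + B) *t D = A *t D + B *t D.
  by rewrite -[A]scale1r tensmxPl !scale1r.
exact: (big_morph (fun A => A *t D) tensDl (tens0mx D)).
Qed.

Lemma tensmx_sumr m n p q I (r : seq I) (P : pred I) (F : I -> 'M[K]_(p, q))
    (D : 'M[K]_(m, n)) :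
  D *t (\sum_(i <- r | P i) F i) = \sum_(i <- r | P i) (D *t F i).
Proof.
have tensDr (A B : 'M[K]_(p, q)) : D *t (A + B) = D *t A + D *t B.
  by rewrite -[A]scale1r tensmxPr !scale1r.
exact: (big_morph (fun A => D *t A) tensDr (tensmx0 D)).
Qed.

Lemma delta_mx_tens m1 n1 m2 n2 (i : 'I_m1) (j : 'I_n1) (k : 'I_m2) (l : 'I_n2) :
  delta_mx (mxtens_index (i, k)) (mxtens_index (j, l)) =
  delta_mx i j *t delta_mx k l :> 'M[K]_(_, _).
Proof.
apply/matrixP => p q.
case: (mxtens_indexP p) => i' k'; case: (mxtens_indexP q) => j' l'.
rewrite tensmxE !mxE !(inj_eq (can_inj (@mxtens_indexK _ _))) !xpair_eqE.
by case: (i' == i); case: (k' == k); case: (j' == j); case: (l' == l);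
  rewrite /= ?mulr1 ?mulr0.
Qed.

Lemma mxtrace_tens m n (A : 'M[K]_m) (B : 'M[K]_n) : \tr (A *t B) = \tr A * \tr B.
Proof. by rewrite /mxtrace mulr_sum; apply: eq_bigr => p _; rewrite mxE. Qed.

Lemma sum_delta_sandwich n (a b : 'I_n) (z : K) :
  \sum_c ((a == c)%:R * z * (b == c)%:R) = z *+ (a == b).
Proof.
rewrite (bigD1 a) //= big1 => [|c /negbTE nac]; last by rewrite (eq_sym a c) nac !mul0r.
by rewrite eqxx mul1r addr0 eq_sym; case: (a == b); rewrite ?mulr1 ?mulr0.
Qed.

Lemma mxtrace_delta n (a b : 'I_n) : \tr (delta_mx a b : 'M[K]_n) = (a == b)%:R.
Proof.
rewrite /mxtrace (bigD1 a) //= big1 => [|i /negbTE nia]; last by rewrite !mxE nia.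
by rewrite !mxE eqxx addr0.
Qed.

Section TensorIndices.
Variables k a b : nat.

Definition idx_assoc (p : 'I_(k * (a * b))) : 'I_(k * a * b) :=
  let: (i, r) := mxtens_unindex p in let: (u, c) := mxtens_unindex r in
  mxtens_index (mxtens_index (i, u), c).

Definition idx_assocV (q : 'I_(k * a * b)) : 'I_(k * (a * b)) :=
  let: (s, c) := mxtens_unindex q in let: (i, u) := mxtens_unindex s in
  mxtens_index (i, mxtens_index (u, c)).

Definition idx_swap (p : 'I_(k * (a * b))) : 'I_(k * b * a) :=
  let: (i, r) := mxtens_unindex p in let: (u, c) := mxtens_unindex r in
  mxtens_index (mxtens_index (i, c), u).

Definition idx_swapV (q : 'I_(k * b * a)) : 'I_(k * (a * b)) :=
  let: (s, u) := mxtens_unindex q in let: (i, c) := mxtens_unindex s in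
  mxtens_index (i, mxtens_index (u, c)).

Lemma idx_assocE i u c :
  idx_assoc (mxtens_index (i, mxtens_index (u, c))) = mxtens_index (mxtens_index (i, u), c).
Proof. by rewrite /idx_assoc !mxtens_indexK. Qed.

Lemma idx_assocVE i u c :
  idx_assocV (mxtens_index (mxtens_index (i, u), c)) = mxtens_index (i, mxtens_index (u, c)).
Proof. by rewrite /idx_assocV !mxtens_indexK. Qed.

Lemma idx_swapE i u c :
  idx_swap (mxtens_index (i, mxtens_index (u, c))) = mxtens_index (mxtens_index (i, c), u).
Proof. by rewrite /idx_swap !mxtens_indexK. Qed.

Lemma idx_swapVE i u c :
  idx_swapV (mxtens_index (mxtens_index (i, c), u)) = mxtens_index (i, mxtens_index (u, c)).
Proof. by rewrite /idx_swapV !mxtens_indexK. Qed.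

Lemma idx_assocK : cancel idx_assoc idx_assocV.
Proof.
move=> p; case: (mxtens_indexP p) => i r; case: (mxtens_indexP r) => u c.
by rewrite idx_assocE idx_assocVE.
Qed.

Lemma idx_assocVK : cancel idx_assocV idx_assoc.
Proof.
move=> p; case: (mxtens_indexP p) => s c; case: (mxtens_indexP s) => i u.
by rewrite idx_assocVE idx_assocE.
Qed.

Lemma idx_swapK : cancel idx_swap idx_swapV.
Proof.
move=> p; case: (mxtens_indexP p) => i r; case: (mxtens_indexP r) => u c.
by rewrite idx_swapE idx_swapVE.
Qed.

Lemma idx_swapVK : cancel idx_swapV idx_swap.
Proof.
move=> p; case: (mxtens_indexP p) => s u; case: (mxtens_indexP s) => i c.
by rewrite idx_swapVE idx_swapE.
Qed.

Lemma mxsub_idx_assoc (A : 'M[K]_k) (B : 'M[K]_a) (D : 'M[K]_b) :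
  mxsub idx_assoc idx_assoc ((A *t B) *t D) = A *t (B *t D).
Proof.
apply/matrixP => s t.
case: (mxtens_indexP s) => i s1; case: (mxtens_indexP s1) => u c.
case: (mxtens_indexP t) => j t1; case: (mxtens_indexP t1) => v d.
by rewrite mxE !idx_assocE !tensmxE mulrA.
Qed.

Lemma mxsub_idx_assocV (A : 'M[K]_k) (B : 'M[K]_a) (D : 'M[K]_b) :
  mxsub idx_assocV idx_assocV (A *t (B *t D)) = (A *t B) *t D.
Proof.
apply/matrixP => s t.
case: (mxtens_indexP s) => s1 c; case: (mxtens_indexP s1) => i u.
case: (mxtens_indexP t) => t1 d; case: (mxtens_indexP t1) => j v.
by rewrite mxE !idx_assocVE !tensmxE mulrA.
Qed.

Lemma mxsub_idx_swap (A : 'M[K]_k) (B : 'M[K]_a) (D : 'M[K]_b) :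
  mxsub idx_swap idx_swap ((A *t D) *t B) = A *t (B *t D).
Proof.
apply/matrixP => s t.
case: (mxtens_indexP s) => i s1; case: (mxtens_indexP s1) => u c.
case: (mxtens_indexP t) => j t1; case: (mxtens_indexP t1) => v d.
by rewrite mxE !idx_swapE !tensmxE mulrA mulrAC.
Qed.

Lemma mxsub_idx_swapV (A : 'M[K]_k) (B : 'M[K]_a) (D : 'M[K]_b) :
  mxsub idx_swapV idx_swapV (A *t (B *t D)) = (A *t D) *t B.
Proof.
apply/matrixP => s t.
case: (mxtens_indexP s) => s1 u; case: (mxtens_indexP s1) => i c.
case: (mxtens_indexP t) => t1 v; case: (mxtens_indexP t1) => j d.
by rewrite mxE !idx_swapVE !tensmxE mulrA mulrAC.
Qed.

End TensorIndices.

End MatrixTensor.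

Section SuperOperators.
Variable R : realType.
Local Notation C := (R[i]).

Lemma soapp_is_linear m n (T : superop R m n) : linear (soapp T).
Proof. by move=> a X Y; rewrite /soapp linearP mulmxDl -scalemxAl linearP. Qed.

HB.instance Definition _ (m n : nat) (T : superop R m n) :=
  GRing.isLinear.Build C 'M[C]_m 'M[C]_n *:%R (@soapp R m n T) (soapp_is_linear T).

Lemma socomp_is_linear m n k (T : superop R n k) : linear (@socomp R m n k T).
Proof. by move=> a X Y; rewrite /socomp mulmxDl scalemxAl. Qed.

HB.instance Definition _ (m n k : nat) (T : superop R n k) :=
  GRing.isLinear.Build C (superop R m n) (superop R m k) *:%R (@socomp R m n k T)
    (socomp_is_linear T).

Lemma soappPl m n (T S : superop R m n) a X :
  soapp (a *: T + S) X = a *: soapp T X + soapp S X.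
Proof. by rewrite /soapp mulmxDr -scalemxAr linearP. Qed.

Lemma soappZl m n (T : superop R m n) a X : soapp (a *: T) X = a *: soapp T X.
Proof. by rewrite /soapp -scalemxAr linearZ. Qed.

Lemma soapp_comp m n k (T1 : superop R n k) (T2 : superop R m n) X :
  soapp (socomp T1 T2) X = soapp T1 (soapp T2 X).
Proof. by rewrite /soapp /socomp vec_mxK mulmxA. Qed.

Lemma superop_ext m n (T S : superop R m n) :
  (forall X, soapp T X = soapp S X) -> T = S.
Proof.
move=> eqTS; apply/row_matrixP => i.
have := eqTS (vec_mx (delta_mx 0 i)).
by rewrite /soapp vec_mxK -!rowE => /(can_inj vec_mxK).
Qed.

Lemma soapp_id n X : soapp (soid R n) X = X.
Proof. by rewrite /soapp /soid mulmx1 mxvecK. Qed.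

Lemma socomp1l m n (T : superop R m n) : socomp (soid R n) T = T.
Proof. by rewrite /socomp /soid mulmx1. Qed.

Lemma socomp1r m n (T : superop R m n) : socomp T (soid R m) = T.
Proof. by rewrite /socomp /soid mul1mx. Qed.

Lemma socompA m n k l (A : superop R k l) (B : superop R n k) (D : superop R m n) :
  socomp A (socomp B D) = socomp (socomp A B) D.
Proof. by rewrite /socomp mulmxA. Qed.

Lemma socompPl m n k a (A B : superop R n k) (D : superop R m n) :
  socomp (a *: A + B) D = a *: socomp A D + socomp B D.
Proof. by rewrite /socomp mulmxDr scalemxAr. Qed.

Lemma socompZl m n k a (A : superop R n k) (D : superop R m n) :
  socomp (a *: A) D = a *: socomp A D.
Proof. by rewrite /socomp -scalemxAr. Qed.

Lemma socompBl m n k (A B : superop R n k) (D : superop R m n) :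
  socomp (A - B) D = socomp A D - socomp B D.
Proof. by rewrite /socomp mulmxBr. Qed.

Lemma soapp_dephase n X : soapp (dephase R n) X = diag_mx (\row_i X i i).
Proof.
rewrite /soapp /dephase lin_mx_app // => a Y Z.
by apply/matrixP => i j; rewrite !mxE; case: (i == j); rewrite ?mulr1n ?mulr0n ?mulr1 ?mulr0 ?addr0.
Qed.

Lemma dephase_idem n : socomp (dephase R n) (dephase R n) = dephase R n.
Proof.
apply: superop_ext => X; rewrite soapp_comp !soapp_dephase.
by apply/matrixP => i j; rewrite !mxE eqxx mulr1n.
Qed.

End SuperOperators.

Section Tensor.
Variable R : realType.
Local Notation C := (R[i]).

Lemma soapp_expand m n (T : superop R m n) X :
  soapp T X = \sum_(i < m) \sum_(j < m) X i j *: soapp T (delta_mx i j).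
Proof.
rewrite {1}[X]matrix_sum_delta linear_sum; apply: eq_bigr => i _.
by rewrite linear_sum; apply: eq_bigr => j _; rewrite linearZ.
Qed.

Lemma soapp_sotensE m1 n1 m2 n2 (T1 : superop R m1 n1) (T2 : superop R m2 n2) X :
  soapp (sotens T1 T2) X =
    \sum_(i < m1) \sum_(j < m1) \sum_(k < m2) \sum_(l < m2)
      X (mxtens_index (i, k)) (mxtens_index (j, l)) *:
        (soapp T1 (delta_mx i j) *t soapp T2 (delta_mx k l)).
Proof.
rewrite /soapp /sotens lin_mx_app // => a Y Z.
do 4![rewrite scaler_sumr -big_split; apply: eq_bigr => ? _].
by rewrite !mxE scalerDl scalerA.
Qed.

Lemma soapp_sotens m1 n1 m2 n2 (T1 : superop R m1 n1) (T2 : superop R m2 n2) A B :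
  soapp (sotens T1 T2) (A *t B) = soapp T1 A *t soapp T2 B.
Proof.
rewrite soapp_sotensE [soapp T1 A]soapp_expand tensmx_suml.
apply: eq_bigr => i _; rewrite tensmx_suml; apply: eq_bigr => j _.
rewrite tensmxZl [soapp T2 B]soapp_expand tensmx_sumr scaler_sumr.
apply: eq_bigr => k _; rewrite tensmx_sumr scaler_sumr; apply: eq_bigr => l _.
by rewrite tensmxE tensmxZr scalerA.
Qed.

Lemma superop_tens_ext m1 m2 n (T S : superop R (m1 * m2) n) :
  (forall i j k l, soapp T (delta_mx i j *t delta_mx k l) =
                   soapp S (delta_mx i j *t delta_mx k l)) ->
  T = S.
Proof.
move=> eqTS; apply: superop_ext => X.
rewrite (soapp_expand T) (soapp_expand S); apply: eq_bigr => p _; apply: eq_bigr => q _.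
case: (mxtens_indexP p) => i k; case: (mxtens_indexP q) => j l.
by rewrite delta_mx_tens eqTS.
Qed.

Lemma sotens_comp m1 n1 k1 m2 n2 k2 (A1 : superop R n1 k1) (A2 : superop R m1 n1)
    (B1 : superop R n2 k2) (B2 : superop R m2 n2) :
  sotens (socomp A1 A2) (socomp B1 B2) = socomp (sotens A1 B1) (sotens A2 B2).
Proof.
by apply: superop_tens_ext => i j k l; rewrite soapp_comp !soapp_sotens !soapp_comp.
Qed.

Lemma sotensPl m1 n1 m2 n2 a (A B : superop R m1 n1) (D : superop R m2 n2) :
  sotens (a *: A + B) D = a *: sotens A D + sotens B D.
Proof.
apply: superop_tens_ext => i j k l.
rewrite [RHS]soappPl [LHS]soapp_sotens [X in _ = _ *: X + _]soapp_sotens.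
by rewrite [X in _ = _ + X]soapp_sotens [in LHS]soappPl tensmxPl.
Qed.

Lemma sotens_is_linear m1 n1 m2 n2 (A : superop R m1 n1) :
  linear (@sotens R m1 n1 m2 n2 A).
Proof.
move=> a B D; apply: superop_tens_ext => i j k l.
rewrite [RHS]soappPl [LHS]soapp_sotens [X in _ = _ *: X + _]soapp_sotens.
by rewrite [X in _ = _ + X]soapp_sotens [in LHS]soappPl tensmxPr.
Qed.

HB.instance Definition _ (m1 n1 m2 n2 : nat) (A : superop R m1 n1) :=
  GRing.isLinear.Build C (superop R m2 n2) (superop R (m1 * m2) (n1 * n2)) *:%R
    (@sotens R m1 n1 m2 n2 A) (sotens_is_linear A).

Lemma sotensBl m1 n1 m2 n2 (A B : superop R m1 n1) (D : superop R m2 n2) :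
  sotens (A - B) D = sotens A D - sotens B D.
Proof. by rewrite (addrC A) -scaleN1r sotensPl scaleN1r addrC. Qed.

Lemma dephase_tens m k : dephase R (m * k) = sotens (dephase R m) (dephase R k).
Proof.
apply: superop_tens_ext => i j p q.
rewrite soapp_sotens !soapp_dephase; apply/matrixP => x y.
case: (mxtens_indexP x) => i' p'; case: (mxtens_indexP y) => j' q'.
rewrite tensmxE !mxE !mxtens_indexK /= !(inj_eq (can_inj (@mxtens_indexK _ _))) !xpair_eqE.
case: (i' == i); case: (i' == j); case: (i' == j'); case: (p' == p); case: (p' == q);
  case: (p' == q'); by rewrite /= ?mulr1n ?mulr0n ?mulr0 ?mul0r ?mulr1.
Qed.

End Tensor.

Section CompletePositivity.
Variable R : realType.
Local Notation C := (R[i]).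

Definition qform n (x : 'cV[C]_n) (A : 'M[C]_n) : C :=
  ((map_mx Num.conj x)^T *m A *m x) 0 0.

Lemma qformE n (x : 'cV[C]_n) (A : 'M[C]_n) :
  qform x A = \sum_i \sum_j Num.conj (x i 0) * A i j * x j 0.
Proof.
rewrite /qform mxE; under eq_bigr => j _ do rewrite mxE mulr_suml.
rewrite exchange_big /=; apply: eq_bigr => i _; apply: eq_bigr => j _.
by rewrite !mxE.
Qed.

Lemma qformD n (x : 'cV[C]_n) A B : qform x (A + B) = qform x A + qform x B.
Proof. by rewrite /qform mulmxDr mulmxDl mxE. Qed.

Lemma qformZ n (x : 'cV[C]_n) a A : qform x (a *: A) = a * qform x A.
Proof. by rewrite /qform -scalemxAr -scalemxAl mxE. Qed.

Lemma psd0 n : psdmx (0 : 'M[C]_n).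
Proof. by move=> x; rewrite mulmx0 mul0mx mxE. Qed.

Lemma psdD n (A B : 'M[C]_n) : psdmx A -> psdmx B -> psdmx (A + B).
Proof.
by move=> psdA psdB x; rewrite -/(qform x _) qformD addr_ge0 //; [apply: psdA | apply: psdB].
Qed.

Lemma psdZ n (a : C) (A : 'M[C]_n) : 0 <= a -> psdmx A -> psdmx (a *: A).
Proof. by move=> a_ge0 psdA x; rewrite -/(qform x _) qformZ mulr_ge0 //; apply: psdA. Qed.

Lemma psd_sum n I (r : seq I) (P : pred I) (F : I -> 'M[C]_n) :
  (forall i, P i -> psdmx (F i)) -> psdmx (\sum_(i <- r | P i) F i).
Proof.
move=> psdF; elim/big_rec: _ => [|i A Pi psdA]; first exact: psd0.
exact: psdD (psdF i Pi) psdA.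
Qed.

Lemma psd_mxsub N M (s : 'I_N -> 'I_M) (Y : 'M[C]_M) :
  bijective s -> psdmx Y -> psdmx (mxsub s s Y).
Proof.
move=> [t st ts] psdY x; rewrite -/(qform x _).
have := psdY (\col_p x (t p) 0); rewrite -/(qform _ _) !qformE.
have bij_s : bijective s by exists t.
rewrite (reindex s (onW_bij _ bij_s)) /=.
under eq_bigr => i _ do rewrite (reindex s (onW_bij _ bij_s)) /=.
congr (0 <= _); apply: eq_bigr => i _; apply: eq_bigr => j _.
by rewrite !mxE !st.
Qed.

Definition reindex_op N M (s : 'I_N -> 'I_M) : superop R M N := lin_mx (mxsub s s).

Lemma soapp_reindex_op N M (s : 'I_N -> 'I_M) X : soapp (reindex_op s) X = mxsub s s X.
Proof. exact/lin_mx_app/linearP. Qed.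

Definition ampl k m n (T : superop R m n) : superop R (k * m) (k * n) :=
  sotens (soid R k) T.

Lemma ampl_comp k m n l (A : superop R n l) (B : superop R m n) :
  ampl k (socomp A B) = socomp (ampl k A) (ampl k B).
Proof. by rewrite /ampl -sotens_comp socomp1l. Qed.

Lemma positive_comp m n l (A : superop R n l) (B : superop R m n) :
  positive_map A -> positive_map B -> positive_map (socomp A B).
Proof. by move=> posA posB X psdX; rewrite soapp_comp; apply/posA/posB. Qed.

Lemma positive_reindex_op N M (s : 'I_N -> 'I_M) :
  bijective s -> positive_map (reindex_op s).
Proof. by move=> bij_s X psdX; rewrite soapp_reindex_op; apply: psd_mxsub. Qed.

Lemma ampl_id_tens k a p q (B : superop R p q) :
  ampl k (sotens (soid R a) B) =
  socomp (reindex_op (@idx_assoc k a q))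
    (socomp (ampl (k * a) B) (reindex_op (@idx_assocV k a p))).
Proof.
apply: superop_tens_ext => i j x y.
case: (mxtens_indexP x) => u c; case: (mxtens_indexP y) => v d.
rewrite delta_mx_tens !soapp_comp !soapp_reindex_op mxsub_idx_assocV.
by rewrite /ampl !soapp_sotens !soapp_id mxsub_idx_assoc.
Qed.

Lemma ampl_tens_id k b p q (A : superop R p q) :
  ampl k (sotens A (soid R b)) =
  socomp (reindex_op (@idx_swap k q b))
    (socomp (ampl (k * b) A) (reindex_op (@idx_swapV k p b))).
Proof.
apply: superop_tens_ext => i j x y.
case: (mxtens_indexP x) => u c; case: (mxtens_indexP y) => v d.
rewrite delta_mx_tens !soapp_comp !soapp_reindex_op mxsub_idx_swapV.
by rewrite /ampl !soapp_sotens !soapp_id mxsub_idx_swap.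
Qed.

Lemma CP_comp m n l (A : superop R n l) (B : superop R m n) :
  completely_positive A -> completely_positive B -> completely_positive (socomp A B).
Proof. by move=> cpA cpB k; rewrite -/(ampl k _) ampl_comp; apply: positive_comp. Qed.

(* [A (x) B = (A (x) id) o (id (x) B)], and amplifying either factor is, up to
   a reordering of the tensor factors, an amplification of [A] or of [B]. *)
Lemma CP_tens m1 n1 m2 n2 (A : superop R m1 n1) (B : superop R m2 n2) :
  completely_positive A -> completely_positive B -> completely_positive (sotens A B).
Proof.
move=> cpA cpB k.
have -> : sotens A B = socomp (sotens A (soid R n2)) (sotens (soid R m1) B).
  by rewrite -sotens_comp socomp1l socomp1r.
rewrite -/(ampl k _) ampl_comp; apply: positive_comp.
  rewrite ampl_tens_id; apply: positive_comp; first exact/positive_reindex_op/(Bijective (@idx_swapK _ _ _) (@idx_swapVK _ _ _)).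
  by apply: positive_comp; [apply: cpA | apply/positive_reindex_op/(Bijective (@idx_swapVK _ _ _) (@idx_swapK _ _ _))].
rewrite ampl_id_tens; apply: positive_comp; first exact/positive_reindex_op/(Bijective (@idx_assocK _ _ _) (@idx_assocVK _ _ _)).
by apply: positive_comp; [apply: cpB | apply/positive_reindex_op/(Bijective (@idx_assocVK _ _ _) (@idx_assocK _ _ _))].
Qed.

End CompletePositivity.

Section QuantumOperations.
Variable R : realType.
Local Notation C := (R[i]).
Local Notation D := (dephase R).

Lemma TP_comp m n l (A : superop R n l) (B : superop R m n) :
  trace_preserving A -> trace_preserving B -> trace_preserving (socomp A B).
Proof. by move=> tpA tpB X; rewrite soapp_comp tpA tpB. Qed.

Lemma TP_tens m1 n1 m2 n2 (A : superop R m1 n1) (B : superop R m2 n2) :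
  trace_preserving A -> trace_preserving B -> trace_preserving (sotens A B).
Proof.
move=> tpA tpB X; rewrite soapp_expand {2}[X]matrix_sum_delta !raddf_sum /=.
apply: eq_bigr => p _; rewrite !raddf_sum /=; apply: eq_bigr => q _; rewrite !mxtraceZ.
case: (mxtens_indexP p) => i k; case: (mxtens_indexP q) => j l.
by rewrite delta_mx_tens soapp_sotens !mxtrace_tens tpA tpB.
Qed.

Lemma TP_dephase n : trace_preserving (D n).
Proof.
by move=> X; rewrite soapp_dephase mxtrace_diag; apply: eq_bigr => j _; rewrite mxE.
Qed.

Lemma psd_diag_sandwich N (d : 'rV[C]_N) (X : 'M[C]_N) :
  (forall j, Num.conj (d 0 j) = d 0 j) -> psdmx X ->
  psdmx (diag_mx d *m X *m diag_mx d).
Proof.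
move=> d_real psdX x; rewrite -/(qform x _).
have -> : qform x (diag_mx d *m X *m diag_mx d) = qform (diag_mx d *m x) X.
  rewrite /qform; congr (_ 0 0).
  have -> : (map_mx Num.conj (diag_mx d *m x))^T = (map_mx Num.conj x)^T *m diag_mx d.
    apply/matrixP => i j; rewrite mul_diag_mx mul_mx_diag !mxE.
    by rewrite rmorphM /= d_real mulrC.
  by rewrite !mulmxA.
exact: psdX.
Qed.

Definition slot_proj k n (c : 'I_n) : 'M[C]_(k * n) :=
  diag_mx (\row_p ((mxtens_unindex p).2 == c)%:R).

Lemma soapp_ampl_dephase k n X :
  soapp (ampl k (D n)) X = \sum_c (slot_proj k c *m X *m slot_proj k c).
Proof.
pose g (Y : 'M[C]_(k * n)) := \sum_(c < n) (slot_proj k c *m Y *m slot_proj k c).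
have g_lin : linear g.
  move=> a Y Z; rewrite /g scaler_sumr -big_split; apply: eq_bigr => c _.
  by rewrite mulmxDr mulmxDl -scalemxAr -scalemxAl.
suff -> : ampl k (D n) = lin_mx g by rewrite /soapp lin_mx_app.
apply: superop_tens_ext => i j p q.
rewrite {2}/soapp lin_mx_app // /ampl soapp_sotens soapp_id soapp_dephase.
apply/matrixP => x y; rewrite /g summxE.
case: (mxtens_indexP x) => i' p'; case: (mxtens_indexP y) => j' q'.
under eq_bigr => c _ do rewrite mul_mx_diag mul_diag_mx !mxE !mxtens_indexK /=.
rewrite !mxE !mxtens_indexK /= sum_delta_sandwich.
by have [<-|_] := eqVneq p' q'; rewrite ?mulr1n ?mulr0n ?mulr0.
Qed.

Lemma CP_dephase n : completely_positive (D n).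
Proof.
move=> k X psdX; rewrite -/(ampl k _) soapp_ampl_dephase.
apply: psd_sum => c _; apply: psd_diag_sandwich => // j.
by rewrite mxE; case: (_ == _); rewrite ?conjC0 ?conjC1.
Qed.

Lemma quantum_dephase n : quantum_op (D n).
Proof. by split; [exact: CP_dephase | exact: TP_dephase]. Qed.

Lemma quantum_comp m n l (A : superop R n l) (B : superop R m n) :
  quantum_op A -> quantum_op B -> quantum_op (socomp A B).
Proof. by move=> [cpA tpA] [cpB tpB]; split; [exact: CP_comp | exact: TP_comp]. Qed.

Lemma quantum_tens m1 n1 m2 n2 (A : superop R m1 n1) (B : superop R m2 n2) :
  quantum_op A -> quantum_op B -> quantum_op (sotens A B).
Proof. by move=> [cpA tpA] [cpB tpB]; split; [exact: CP_tens | exact: TP_tens]. Qed.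

Lemma quantum_conv m n (T S : superop R m n) (t : R) :
  0 <= t <= 1 -> quantum_op T -> quantum_op S ->
  quantum_op (t%:C%C *: T + (1 - t)%:C%C *: S).
Proof.
move=> /andP[t_ge0 t_le1] [cpT tpT] [cpS tpS]; split.
  move=> k X psdX; rewrite linearP linearZ /= soappPl soappZl.
  by apply: psdD; apply: psdZ; rewrite ?lecR ?subr_ge0 //; [apply: cpT | apply: cpS].
move=> X; rewrite soappPl soappZl raddfD /= !mxtraceZ tpT tpS -mulrDl.
by rewrite -rmorphD /= addrC subrK mul1r.
Qed.

Lemma DI_comp m n l (A : superop R n l) (B : superop R m n) :
  DI A -> DI B -> DI (socomp A B).
Proof.
move=> [qA eA] [qB eB]; split; first exact: quantum_comp.
have DAB : socomp (D l) (socomp A B) = socomp (socomp (D l) A) (socomp (D n) B).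
  by rewrite [LHS]socompA [in LHS]eA -socompA.
by rewrite [LHS]DAB [in LHS]eB DAB [LHS]socompA.
Qed.

Lemma DI_dephase n : DI (D n).
Proof. by split; [exact: quantum_dephase | rewrite !dephase_idem]. Qed.

Lemma DI_dephase_comp m n (P : superop R m n) : DI P -> DI (socomp (D n) P).
Proof. by move=> DI_P; apply: DI_comp => //; exact: DI_dephase. Qed.

Lemma DI_dephase_sandwich m n (T : superop R m n) :
  quantum_op T -> DI (socomp (D n) (socomp T (D m))).
Proof.
move=> qT; split.
  apply: quantum_comp; first exact: quantum_dephase.
  by apply: quantum_comp => //; exact: quantum_dephase.
by rewrite !socompA dephase_idem -!socompA dephase_idem.
Qed.

Lemma DI_tens m1 n1 m2 n2 (A : superop R m1 n1) (B : superop R m2 n2) :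
  DI A -> DI B -> DI (sotens A B).
Proof.
move=> [qA eA] [qB eB]; split; first exact: quantum_tens.
by rewrite !dephase_tens -!sotens_comp -eA -eB.
Qed.

Lemma DI_conv m n (T S : superop R m n) (t : R) :
  0 <= t <= 1 -> DI T -> DI S -> DI (t%:C%C *: T + (1 - t)%:C%C *: S).
Proof.
move=> t01 [qT eT] [qS eS]; split; first exact: quantum_conv.
by rewrite linearP linearZ /= socompPl socompZl -eT -eS.
Qed.

End QuantumOperations.

Section QuantumSpan.
Variable R : realType.
Local Notation C := (R[i]).

Lemma qspan0 m n : in_qspan (0 : superop R m n).
Proof. by exists 0%N, (fun _ => 0), (fun _ => 0); split; [case | rewrite big_ord0]. Qed.

Lemma qspan_quantum m n (P : superop R m n) : quantum_op P -> in_qspan P.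
Proof. by move=> qP; exists 1%N, (fun _ => 1), (fun _ => P); rewrite big_ord1 scale1r. Qed.

Lemma qspanZ m n a (X : superop R m n) : in_qspan X -> in_qspan (a *: X).
Proof.
move=> [k [c [P [qP ->]]]]; exists k, (fun i => a * c i), P; split => //.
by rewrite scaler_sumr; apply: eq_bigr => i _; rewrite scalerA.
Qed.

Lemma qspanD m n (X Y : superop R m n) : in_qspan X -> in_qspan Y -> in_qspan (X + Y).
Proof.
move=> [k1 [c1 [P1 [qP1 ->]]]] [k2 [c2 [P2 [qP2 ->]]]].
exists (k1 + k2)%N, (fun i => match split i with inl j => c1 j | inr j => c2 j end),
  (fun i => match split i with inl j => P1 j | inr j => P2 j end); split.
  by move=> i; case: (split i).
rewrite big_split_ord /=; congr (_ + _); apply: eq_bigr => i _.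
  by rewrite (unsplitK (inl _ i)).
by rewrite (unsplitK (inr _ i)).
Qed.

Lemma qspanB m n (X Y : superop R m n) : in_qspan X -> in_qspan Y -> in_qspan (X - Y).
Proof. by move=> spX spY; rewrite -scaleN1r; apply/qspanD/qspanZ. Qed.

Lemma qspan_dephase_diff m n (T P : superop R m n) : quantum_op T -> quantum_op P ->
  in_qspan (socomp (dephase R n) T - socomp (dephase R n) P).
Proof.
by move=> qT qP; apply: qspanB; apply/qspan_quantum/quantum_comp => //;
  exact: quantum_dephase.
Qed.

(* A maximal-rank family of quantum operations spans all of them. *)
Lemma qspan_spanning_family m n : exists r (M : 'M[C]_(r, m * m * (n * n))),
  (forall i, quantum_op (vec_mx (row i M) : superop R m n)) /\
  (forall X : superop R m n, in_qspan X -> (mxvec X <= M)%MS).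
Proof.
pose good d := exists r (M : 'M[C]_(r, m * m * (n * n))),
  (forall i, quantum_op (vec_mx (row i M) : superop R m n)) /\ \rank M = d.
have good0 : exists d, boolp.asbool (good d).
  exists 0%N; apply/boolp.asboolP; exists 0%N, 0; split; first by case.
  by rewrite mxrank0.
have good_ub d : boolp.asbool (good d) -> (d <= m * m * (n * n))%N.
  by move=> /boolp.asboolP [r [M [_ <-]]]; exact: rank_leq_col.
case: (ex_maxnP good0 good_ub) => d /boolp.asboolP [r [M [qM rkM]]] maxd.
exists r, M; split => //.
have row1 N (v : 'rV[C]_N) : row 0 v = v by apply/matrixP => i j; rewrite !mxE (ord1 i).
have quantum_sub Q : quantum_op Q -> (mxvec Q <= M)%MS.
  move=> qQ; pose M' := col_mx M (mxvec Q).
  have qM' i : quantum_op (vec_mx (row i M') : superop R m n).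
    by case: (split_ordP i) => j ->; rewrite ?rowKu ?rowKd // (ord1 j) row1 mxvecK.
  have subMM' : (M <= M')%MS.
    by apply/row_subP => i; rewrite -(rowKu i M (mxvec Q)) row_sub.
  have rkM' : (\rank M' <= d)%N by apply/maxd/boolp.asboolP; exists (r + 1)%N, M'.
  have [_] := mxrank_leqif_sup subMM'.
  rewrite eqn_leq (mxrankS subMM') rkM rkM' /= => /esym eqMM'.
  apply: submx_trans eqMM'.
  by rewrite -(row1 _ (mxvec Q)) -(rowKd 0 M (mxvec Q)) row_sub.
move=> X [k [c [Q [qQ ->]]]].
rewrite linear_sum; apply: summx_sub => i _.
by rewrite linearZ; apply/scalemx_sub/quantum_sub.
Qed.

Lemma mx_coord_decomp m n r (M : 'M[C]_(r, m * m * (n * n))) (X : superop R m n) :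
  (mxvec X <= M)%MS ->
  X = \sum_i (mxvec X *m pinvmx M) 0 i *: (vec_mx (row i M) : superop R m n).
Proof.
move=> subXM; rewrite -{1}(mxvecK X) -{1}(mulmxKpV subXM) mulmx_sum_row linear_sum.
by apply: eq_bigr => i _; rewrite linearZ.
Qed.

End QuantumSpan.

Section NormOnSpan.
Variables (R : realType) (m n : nat) (nrm : superop R m n -> R).
Hypothesis nrm_norm : norm_on_qspan nrm.
Local Notation C := (R[i]).

Lemma nrm_ge0 X : in_qspan X -> 0 <= nrm X.
Proof. by case: nrm_norm => + _; apply. Qed.

Lemma nrm_eq0 X : in_qspan X -> nrm X = 0 -> X = 0.
Proof. by case: nrm_norm => _ [+ _]; apply. Qed.

Lemma nrmZ a X : in_qspan X -> nrm (a *: X) = Normc.normc a * nrm X.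
Proof. by case: nrm_norm => _ [_ [+ _]]; apply. Qed.

Lemma nrmD X Y : in_qspan X -> in_qspan Y -> nrm (X + Y) <= nrm X + nrm Y.
Proof. by case: nrm_norm => _ [_ [_]]; apply. Qed.

Lemma nrm0 : nrm 0 = 0.
Proof.
rewrite -(scale0r (0 : superop R m n)) nrmZ; last exact: qspan0.
by apply/eqP; rewrite mulf_eq0 -[_ == 0]/(Normc.normc 0 == 0) Normc.normc0 eqxx.
Qed.

Lemma nrmN X : in_qspan X -> nrm (- X) = nrm X.
Proof.
move=> spX; rewrite -scaleN1r nrmZ // -[RHS]mul1r; congr (_ * _).
by rewrite -(Normc.normc1 R); exact: (@normcN R 1).
Qed.

Lemma nrm_dist_le X Y : in_qspan X -> in_qspan Y -> `|nrm X - nrm Y| <= nrm (X - Y).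
Proof.
have nrm_subr U V : in_qspan U -> in_qspan V -> nrm U - nrm V <= nrm (U - V).
  by move=> spU spV; rewrite lerBlDr -{1}(subrK V U) nrmD //; apply: qspanB.
move=> spX spY; rewrite ler_norml nrm_subr // andbT lerNl opprB.
by rewrite -[X - Y]opprB nrmN ?nrm_subr //; apply: qspanB.
Qed.

Lemma nrm_sum_le k (c : 'I_k -> C) (F : 'I_k -> superop R m n) :
  (forall i, in_qspan (F i)) ->
  nrm (\sum_i c i *: F i) <= \sum_i Normc.normc (c i) * nrm (F i).
Proof.
move=> spF.
pose K (X : superop R m n) (y : R) := in_qspan X /\ nrm X <= y.
suff [] : K (\sum_i c i *: F i) (\sum_i Normc.normc (c i) * nrm (F i)) by [].
apply: (big_rec2 K); first by split; [exact: qspan0 | rewrite nrm0].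
move=> i X y _ [spX le_Xy]; split; first exact/qspanD/spX/qspanZ.
by apply: le_trans (nrmD (qspanZ _ (spF i)) spX) _; rewrite nrmZ // lerD2l.
Qed.

End NormOnSpan.

Section EntryBound.
Variable R : realType.
Local Notation C := (R[i]).
Local Notation cRe := (@complex.Re R).
Local Notation cIm := (@complex.Im R).

Lemma ReD (x y : C) : cRe (x + y) = cRe x + cRe y. Proof. by case: x; case: y. Qed.

Lemma ge0_complexE (z : C) : (0 <= z) = (cIm z == 0) && (0 <= cRe z).
Proof. by rewrite lecE. Qed.

Lemma Re_sum I (r : seq I) (P : pred I) (F : I -> C) :
  cRe (\sum_(i <- r | P i) F i) = \sum_(i <- r | P i) cRe (F i).
Proof. exact: (big_morph _ ReD). Qed.

Lemma qform_delta2 N (rho : 'M[C]_N) c d (z : C) :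
  qform (delta_mx c 0 + z *: delta_mx d 0) rho =
  rho c c + z * rho c d + Num.conj z * rho d c + Num.conj z * z * rho d d.
Proof.
have sum_deltar (F : 'I_N -> C) e : \sum_j F j * (j == e)%:R = F e.
  by rewrite (bigD1 e) //= eqxx mulr1 big1 ?addr0 // => j /negbTE ->; rewrite mulr0.
have sum_deltal (F : 'I_N -> C) e : \sum_j (j == e)%:R * F j = F e.
  by rewrite (bigD1 e) //= eqxx mul1r big1 ?addr0 // => j /negbTE ->; rewrite mul0r.
have xE i : (delta_mx c 0 + z *: delta_mx d 0 : 'cV[C]_N) i 0 =
    (i == c)%:R + z * (i == d)%:R.
  by rewrite !mxE eqxx !andbT.
have conj_nat (b : bool) : Num.conj (b%:R : C) = b%:R.
  by case: b; rewrite ?conjC0 ?conjC1.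
rewrite qformE.
under eq_bigr => i _ do under eq_bigr => j _ do rewrite !xE.
have inner (w : C) i : \sum_j w * rho i j * ((j == c)%:R + z * (j == d)%:R)
    = w * (rho i c + z * rho i d).
  transitivity (\sum_j (w * (rho i j * (j == c)%:R) + (w * z) * (rho i j * (j == d)%:R))).
    by apply: eq_bigr => j _; ring.
  by rewrite big_split /= -!mulr_sumr !sum_deltar; ring.
under eq_bigr => i _ do rewrite inner rmorphD rmorphM /= !conj_nat.
transitivity (\sum_i ((i == c)%:R * (rho i c + z * rho i d) +
    Num.conj z * ((i == d)%:R * (rho i c + z * rho i d)))).
  by apply: eq_bigr => i _; ring.
by rewrite big_split /= -mulr_sumr !sum_deltal; ring.
Qed.

(* The hypothesis is positivity of a matrix on [e_p + z e_q]; testing it at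
   [z = 1, -1, i, -i] suffices. *)
Lemma psd2_offdiag_bound (a b u v : C) :
  (forall z : C, 0 <= a + z * u + Num.conj z * v + Num.conj z * z * b) ->
  2 * `|cRe u| <= cRe a + cRe b /\ 2 * `|cIm u| <= cRe a + cRe b.
Proof.
move=> psd2; move: (psd2 1) (psd2 (-1)) (psd2 'i%C) (psd2 (- 'i%C)); clear psd2.
rewrite !ge0_complexE; case: a b u v => [a1 a2] [b1 b2] [u1 u2] [v1 v2] /=.
move=> /andP[/eqP e1 i1] /andP[/eqP e2 i2] /andP[/eqP e3 i3] /andP[/eqP e4 i4].
by split; rewrite -[2 : R]ger0_norm // -normrM ler_norml; apply/andP; split; lra.
Qed.

Lemma psd_entry_bound N (rho : 'M[C]_N) : psdmx rho -> forall p q,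
  `|cRe (rho p q)| <= cRe (\tr rho) /\ `|cIm (rho p q)| <= cRe (\tr rho).
Proof.
move=> psd_rho p q.
have diag_le_tr c : cRe (rho c c) <= cRe (\tr rho).
  rewrite /mxtrace Re_sum (bigD1 c) //= lerDl; apply: sumr_ge0 => i _.
  move: (psd_rho (delta_mx i 0 + 0 *: delta_mx i 0)).
  by rewrite -/(qform _ _) qform_delta2 rmorph0 !mul0r !addr0 ge0_complexE => /andP[].
have [] : 2 * `|cRe (rho p q)| <= cRe (rho p p) + cRe (rho q q) /\
          2 * `|cIm (rho p q)| <= cRe (rho p p) + cRe (rho q q).
  apply: (psd2_offdiag_bound (v := rho q p)) => z; move: (psd_rho (delta_mx p 0 + z *: delta_mx q 0)).
  by rewrite -/(qform _ _) qform_delta2.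
by have := diag_le_tr p; have := diag_le_tr q; split; lra.
Qed.

Lemma psd_outer N (w : 'cV[C]_N) : psdmx (w *m (map_mx Num.conj w)^T).
Proof.
move=> x; rewrite !mulmxA -[_ *m w *m _ *m x]mulmxA.
set s := ((map_mx Num.conj x)^T *m w) 0 0.
have -> : ((map_mx Num.conj x)^T *m w *m ((map_mx Num.conj w)^T *m x)) 0 0 =
   s * ((map_mx Num.conj w)^T *m x) 0 0.
  by rewrite mxE big_ord1.
have -> : ((map_mx Num.conj w)^T *m x) 0 0 = Num.conj s.
  rewrite /s !mxE rmorph_sum; apply: eq_bigr => i _.
  by rewrite !mxE rmorphM /= conjCK mulrC.
exact: mulcJ_ge0.
Qed.

(* The unnormalised maximally entangled state [sum_(a,b) |aa><bb|]; its image
   under [id (x) P] is the Choi matrix of [P]. *)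
Definition max_entangled m : 'M[C]_(m * m) :=
  \sum_a \sum_b (delta_mx a b *t delta_mx a b).

Lemma psd_max_entangled m : psdmx (max_entangled m).
Proof.
pose w : 'cV[C]_(m * m) := \sum_a delta_mx (mxtens_index (a, a)) 0.
have w_real : map_mx Num.conj w = w.
  apply/matrixP => i j; rewrite !mxE !summxE rmorph_sum; apply: eq_bigr => a _.
  by rewrite !mxE rmorph_nat.
have -> : max_entangled m = w *m (map_mx Num.conj w)^T.
  rewrite w_real /w linear_sum /= mulmx_suml; apply: eq_bigr => a _.
  rewrite mulmx_sumr; apply: eq_bigr => b _.
  by rewrite trmx_delta mul_delta_mx delta_mx_tens.
exact: psd_outer.
Qed.

Lemma mxtrace_max_entangled m : \tr (max_entangled m) = m%:R.
Proof.
rewrite /max_entangled raddf_sum /=.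
transitivity (\sum_(a < m) (1 : C)); last by rewrite sumr_const card_ord.
apply: eq_bigr => a _; rewrite raddf_sum /=.
under eq_bigr => b _ do rewrite mxtrace_tens !mxtrace_delta -natrM mulnb andbb.
by rewrite (bigD1 a) //= eqxx big1 ?addr0 // => b /negbTE; rewrite eq_sym => ->.
Qed.

Lemma choi_entry m n (P : superop R m n) a b c d :
  soapp (ampl m P) (max_entangled m) (mxtens_index (a, c)) (mxtens_index (b, d)) =
  soapp P (delta_mx a b) c d.
Proof.
have -> : soapp (ampl m P) (max_entangled m) =
    \sum_a' \sum_b' (delta_mx a' b' *t soapp P (delta_mx a' b')).
  rewrite /max_entangled linear_sum /=; apply: eq_bigr => a' _.
  by rewrite linear_sum; apply: eq_bigr => b' _; rewrite /= /ampl soapp_sotens soapp_id.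
rewrite summxE; under eq_bigr => a' _ do
  (rewrite summxE; under eq_bigr => b' _ do rewrite tensmxE mxE).
rewrite (bigD1 a) //= [X in _ + X]big1 => [|a' /negbTE na']; last first.
  by rewrite big1 // => b' _; rewrite eq_sym na' mul0r.
rewrite addr0 eqxx (bigD1 b) //= [X in _ + X]big1 => [|b' /negbTE nb']; last first.
  by rewrite (eq_sym b) nb' mul0r.
by rewrite eqxx addr0 mul1r.
Qed.

(* The Choi matrix of a quantum operation [P] on [m]-dimensional inputs is
   positive semidefinite with trace [m], which bounds its entries, i.e. the
   entries of [P]. *)
Lemma quantum_entry_bound m n (P : superop R m n) : quantum_op P -> forall a b c d,
  `|cRe (soapp P (delta_mx a b) c d)| <= m%:R /\
  `|cIm (soapp P (delta_mx a b) c d)| <= m%:R.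
Proof.
move=> [cpP tpP] a b c d.
have psdJ : psdmx (soapp (ampl m P) (max_entangled m)).
  by apply: cpP; exact: psd_max_entangled.
have trJ : \tr (soapp (ampl m P) (max_entangled m)) = m%:R.
  rewrite (TP_tens (A := soid R m) (B := P)) ?mxtrace_max_entangled // => X.
  by rewrite soapp_id.
have := psd_entry_bound psdJ (mxtens_index (a, c)) (mxtens_index (b, d)).
by rewrite choi_entry trJ -(rmorph_nat (real_complex R)).
Qed.

End EntryBound.

Import boolp topology normedtype derive.
Import numFieldNormedType.Exports Num.Def.
Local Open Scope classical_set_scope.

Section Continuity.
Variable R : realType.

Lemma coord_le_norm N (v : 'rV[R]_N) i : `|v 0 i| <= `|v|.
Proof.
rewrite [leRHS]/normr /= mx_normrE.
by apply/bigmax_geP; right; exists (0, i).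
Qed.

Lemma scalar_bounded N (g : 'rV[R]_N -> R) :
  scalar g -> exists K, 0 <= K /\ forall v, `|g v| <= K * `|v|.
Proof.
move=> g_lin; exists (\sum_i `|g (delta_mx 0 i)|); split; first exact: sumr_ge0.
move=> v; have -> : g v = \sum_i v 0 i * g (delta_mx 0 i).
  rewrite {1}[v]row_sum_delta; elim/big_rec2: _ => [|i y w _ <-].
    have := g_lin 1 0 0; rewrite scale1r addr0 mul1r => g00.
    by apply: (addrI (g 0)); rewrite addr0 -g00.
  by rewrite g_lin.
rewrite mulr_suml; apply: le_trans (ler_norm_sum _ _ _) _.
by apply: ler_sum => i _; rewrite normrM mulrC ler_wpM2l ?coord_le_norm.
Qed.

Lemma lipschitz_within_continuous N (A : set 'rV[R]_N) (f : 'rV[R]_N -> R) K :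
  0 <= K -> {in A &, forall v w, `|f v - f w| <= K * `|v - w|} ->
  {within A, continuous f}.
Proof.
move=> K_ge0 lipf; apply/subspace_continuousP => x Ax P /= /nbhs_normP [e /= e_gt0 eP].
have K1_gt0 : 0 < K + 1 by rewrite ltr_wpDl.
apply/nbhs_ballP; exists (e / (K + 1)) => /= [|y]; first by rewrite divr_gt0.
rewrite mx_norm_ball /= => xy Ay; apply: eP => /=.
apply: le_lt_trans (lipf x y _ _) _; rewrite ?inE //.
apply: le_lt_trans (_ : K * (e / (K + 1)) < e); first by rewrite ler_wpM2l // ltW.
by rewrite mulrA ltr_pdivrMr // [K * e]mulrC ltr_pM2l // ltrDl ltr01.
Qed.

Lemma lipschitz_continuous N (f : 'rV[R]_N -> R) K :
  0 <= K -> (forall v w, `|f v - f w| <= K * `|v - w|) -> continuous f.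
Proof.
move=> K_ge0 lipf; apply/continuous_subspace_setT.
by apply: (lipschitz_within_continuous K_ge0) => v w.
Qed.

Lemma scalar_continuous N (g : 'rV[R]_N -> R) : scalar g -> continuous g.
Proof.
move=> g_lin; have [K [K_ge0 gK]] := scalar_bounded g_lin.
apply: (lipschitz_continuous K_ge0) => v w.
by rewrite -mulN1r -addrC -g_lin addrC scaleN1r gK.
Qed.

Lemma closed_forall (T : topologicalType) I (S : I -> set T) :
  (forall i, closed (S i)) -> closed [set x | forall i, S i x].
Proof.
move=> clS; have -> : [set x | forall i, S i x] = \bigcap_(i in setT) S i.
  by apply/seteqP; split => x /= Sx i //; apply: Sx.
exact: closed_bigI.
Qed.

Lemma closed_implies (T : topologicalType) (P : Prop) (S : set T) :
  (P -> closed S) -> closed [set x | P -> S x].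
Proof.
case: (pselect P) => [p /(_ p)|np _].
  by have -> : [set x | P -> S x] = S by apply/seteqP; split => x /= Sx //; apply: Sx.
by have -> : [set x | P -> S x] = setT by apply/seteqP; split => x //= _.
Qed.

End Continuity.

Section CoordinateEncoding.
Variable R : realType.
Local Notation C := (R[i]).
Local Notation cRe := (@complex.Re R).
Local Notation cIm := (@complex.Im R).

Lemma scalar_Re_Im (U : lmodType R) (F : U -> C) :
  (forall a u v, F (a *: u + v) = a%:C%C * F u + F v) ->
  scalar (fun u => cRe (F u)) /\ scalar (fun u => cIm (F u)).
Proof.
by move=> F_lin; split => a u v; rewrite F_lin; case: (F u) (F v) => [x1 x2] [y1 y2] /=;
  ring.
Qed.

Lemma normc_le_Re_Im (z : C) : Normc.normc z <= `|cRe z| + `|cIm z|.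
Proof.
case: z => a b /=.
have sq_le : a ^+ 2 + b ^+ 2 <= (`|a| + `|b|) ^+ 2.
  rewrite sqrrD -[a ^+ 2](real_normK (num_real a)) -[b ^+ 2](real_normK (num_real b)).
  have := mulr_ge0 (normr_ge0 a) (normr_ge0 b); lra.
by apply: le_trans (ler_wsqrtr sq_le) _; rewrite sqrtr_sqr ger0_norm // addr_ge0.
Qed.

Lemma complex_functional_bound N (F : 'rV[R]_N -> C) :
  (forall a u v, F (a *: u + v) = a%:C%C * F u + F v) ->
  exists K, 0 <= K /\ forall v, Normc.normc (F v) <= K * `|v|.
Proof.
move=> /scalar_Re_Im [/scalar_bounded [KR [KR_ge0 leKR]] /scalar_bounded [KI [KI_ge0 leKI]]].
exists (KR + KI); split => [|v]; first exact: addr_ge0.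
by apply: le_trans (normc_le_Re_Im _) _; rewrite mulrDl lerD.
Qed.

Variables m n : nat.
Local Notation Nv := (m * m * (n * n))%N.

(* The topology of mathcomp-analysis lives on real normed spaces, so
   super-operators are handled through their real coordinates. *)
Definition rcoord (P : superop R m n) : 'rV[R]_(Nv + Nv) :=
  row_mx (map_mx cRe (mxvec P)) (map_mx cIm (mxvec P)).

Definition of_rcoord (v : 'rV[R]_(Nv + Nv)) : superop R m n :=
  vec_mx (map_mx (real_complex R) (lsubmx v) + 'i%C *: map_mx (real_complex R) (rsubmx v)).

Lemma rcoordK : cancel rcoord of_rcoord.
Proof.
move=> P; rewrite /of_rcoord /rcoord row_mxKl row_mxKr -[RHS]mxvecK; congr vec_mx.
by apply/matrixP => i j; rewrite !mxE [RHS]complexE.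
Qed.

Lemma of_rcoordP a v w : of_rcoord (a *: v + w) = a%:C%C *: of_rcoord v + of_rcoord w.
Proof.
rewrite /of_rcoord -linearZ -linearD; congr vec_mx.
by apply/matrixP => i j; rewrite !mxE !rmorphD !rmorphM /=; ring.
Qed.

Lemma of_rcoord_entry v j :
  cRe (mxvec (of_rcoord v) 0 j) = v 0 (lshift _ j) /\
  cIm (mxvec (of_rcoord v) 0 j) = v 0 (rshift _ j).
Proof. by rewrite /of_rcoord vec_mxK !mxE; split => /=; ring. Qed.

Lemma scalar_Re_Im_of_rcoord (F : superop R m n -> C) : scalar F ->
  scalar (fun v => cRe (F (of_rcoord v))) /\ scalar (fun v => cIm (F (of_rcoord v))).
Proof. by move=> F_lin; apply: scalar_Re_Im => a v w; rewrite of_rcoordP F_lin. Qed.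

Lemma closed_of_rcoord_ge0 (F : superop R m n -> C) :
  scalar F -> closed [set v | 0 <= F (of_rcoord v)].
Proof.
move=> /scalar_Re_Im_of_rcoord [/scalar_continuous ReF /scalar_continuous ImF].
have -> : [set v | 0 <= F (of_rcoord v)] =
    (fun v => cIm (F (of_rcoord v))) @^-1` [set x | x = 0] `&`
    (fun v => cRe (F (of_rcoord v))) @^-1` [set x | 0 <= x].
  apply/seteqP; split => v; rewrite /= ge0_complexE; first by move=> /andP[/eqP].
  by move=> [/eqP-> ->].
apply: closedI; apply: preimage_closed; try exact: closed_eq; try exact: closed_ge.
  by move=> v _; exact: ImF.
by move=> v _; exact: ReF.
Qed.

Lemma closed_of_rcoord_eq (F : superop R m n -> C) c :
  scalar F -> closed [set v | F (of_rcoord v) = c].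
Proof.
move=> /scalar_Re_Im_of_rcoord [/scalar_continuous ReF /scalar_continuous ImF].
have -> : [set v | F (of_rcoord v) = c] =
    (fun v => cRe (F (of_rcoord v))) @^-1` [set x | x = cRe c] `&`
    (fun v => cIm (F (of_rcoord v))) @^-1` [set x | x = cIm c].
  apply/seteqP; split => v /=; first by move=> ->.
  by move=> [eRe eIm]; apply/eqP; rewrite eq_complex eRe eIm !eqxx.
apply: closedI; apply: preimage_closed; try exact: closed_eq.
  by move=> v _; exact: ReF.
by move=> v _; exact: ImF.
Qed.

End CoordinateEncoding.

Section CompactDI.
Variables (R : realType) (m n : nat).
Local Notation C := (R[i]).
Local Notation D := (dephase R).
Local Notation Nv := (m * m * (n * n))%N.

Definition DI_rcoords : set 'rV[R]_(Nv + Nv) := [set v | DI (@of_rcoord R m n v)].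

Definition DI_defect (P : superop R m n) : superop R m n :=
  socomp (D n) P - socomp (socomp (D n) P) (D m).

Lemma DI_defectP a P Q : DI_defect (a *: P + Q) = a *: DI_defect P + DI_defect Q.
Proof. by rewrite /DI_defect linearP /= socompPl scalerBr opprD addrACA. Qed.

Lemma DI_entrywise (P : superop R m n) : DI P <->
  (forall k X, psdmx X -> forall x, 0 <= qform x (soapp (ampl k P) X)) /\
  (forall X, \tr (soapp P X) = \tr X) /\
  (forall i j, DI_defect P i j = 0).
Proof.
split => [[[cpP tpP] eP]|[cpP [tpP eP]]].
  by split; [exact: cpP | split=> // i j; rewrite /DI_defect -eP subrr mxE].
split; first by split=> // k X psdX x; exact: cpP.
by apply/eqP; rewrite -subr_eq0; apply/eqP/matrixP => i j; rewrite [LHS]eP mxE.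
Qed.

Lemma closed_DI_rcoords : closed DI_rcoords.
Proof.
have -> : DI_rcoords = [set v |
    (forall k X, psdmx X -> forall x, 0 <= qform x (soapp (ampl k (of_rcoord v)) X)) /\
    (forall X, \tr (soapp (of_rcoord v) X) = \tr X) /\
    (forall i j, DI_defect (of_rcoord v) i j = 0)].
  by apply/seteqP; split => v /DI_entrywise.
have closed_and (P Q : 'rV[R]_(Nv + Nv) -> Prop) :
    closed [set v | P v] -> closed [set v | Q v] -> closed [set v | P v /\ Q v].
  exact: closedI.
apply: (closed_and); last apply: (closed_and).
- apply: closed_forall => k; apply: closed_forall => X; apply: closed_implies => _.
  apply: closed_forall => x.
  apply: (closed_of_rcoord_ge0 (F := fun P => qform x (soapp (ampl k P) X))) => a P Q.
  by rewrite /ampl linearP /= soappPl qformD qformZ.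
- apply: closed_forall => X.
  apply: (closed_of_rcoord_eq (F := fun P => \tr (soapp P X))) => a P Q.
  by rewrite soappPl mxtraceD mxtraceZ.
- apply: closed_forall => i; apply: closed_forall => j.
  apply: (closed_of_rcoord_eq (F := fun P => DI_defect P i j)) => a P Q.
  by rewrite DI_defectP [LHS]mxE [X in X + _]mxE.
Qed.

Lemma superop_entry (P : superop R m n) a b c d :
  P (mxvec_index a b) (mxvec_index c d) = soapp P (delta_mx a b) c d.
Proof. by rewrite /soapp mxvec_delta -rowE !mxE. Qed.

Lemma DI_rcoords_norm_le v : DI_rcoords v -> `|v| <= m%:R.
Proof.
move=> [qv _]; rewrite [leLHS]/normr /= mx_normrE.
apply: bigmax_le => // -[i j] _ /=; rewrite (ord1 i).
have entry_le j' : `|complex.Re (mxvec (of_rcoord v) 0 j')| <= m%:R /\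
                   `|complex.Im (mxvec (of_rcoord v) 0 j')| <= m%:R.
  case: (mxvec_indexP j') => p q.
  case: (mxvec_indexP p) => a b; case: (mxvec_indexP q) => c d.
  by rewrite mxvecE superop_entry; exact: quantum_entry_bound.
case: (split_ordP j) => j' ->; have [eRe eIm] := of_rcoord_entry v j'.
  by rewrite -eRe; exact: (entry_le j').1.
by rewrite -eIm; exact: (entry_le j').2.
Qed.

Lemma compact_DI_rcoords : compact DI_rcoords.
Proof.
apply: bounded_closed_compact closed_DI_rcoords.
rewrite /bounded_set /bounded_near; near=> M => v /DI_rcoords_norm_le /le_trans; apply.
by near: M; apply: nbhs_pinfty_ge; exact: num_real.
Unshelve. all: by end_near.
Qed.

End CompactDI.

Section Minimiser.
Variables (R : realType) (m n : nat) (nrm : superop R m n -> R).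
Hypothesis nrm_norm : norm_on_qspan nrm.
Local Notation D := (dephase R).

(* Expand [L v] in a spanning family of quantum operations: its coefficients
   depend linearly on [v], so each is bounded by a multiple of [`|v|]. *)
Lemma nrm_linear_bound N (L : 'rV[R]_N -> superop R m n) :
  (forall a v w, L (a *: v + w) = a%:C%C *: L v + L w) ->
  exists K, 0 <= K /\ forall v, in_qspan (L v) -> nrm (L v) <= K * `|v|.
Proof.
move=> L_lin; have [r [M [qM spanM]]] := qspan_spanning_family R m n.
pose coef i (X : superop R m n) := (mxvec X *m pinvmx M) 0 i.
have coefL_lin i a v w : coef i (L (a *: v + w)) = a%:C%C * coef i (L v) + coef i (L w).
  by rewrite /coef L_lin linearP /= mulmxDl -scalemxAl !mxE.
have [K coefK] := boolp.choice (fun i => complex_functional_bound (coefL_lin i)).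
have nrm_row_ge0 i : 0 <= nrm (vec_mx (row i M)) by apply/nrm_ge0/qspan_quantum.
exists (\sum_i K i * nrm (vec_mx (row i M))); split.
  by apply: sumr_ge0 => i _; apply: mulr_ge0; [exact: (coefK i).1 | exact: nrm_row_ge0].
move=> v spLv; rewrite (mx_coord_decomp (spanM _ spLv)).
apply: le_trans (nrm_sum_le nrm_norm _ (fun i => qspan_quantum (qM i))) _.
rewrite mulr_suml; apply: ler_sum => i _.
by rewrite mulrAC ler_wpM2r ?(coefK i).2.
Qed.

Lemma DI_minimiser_exists (T : superop R m n) : quantum_op T ->
  exists P, DI P /\ forall P', DI P' ->
    nrm (socomp (D n) T - socomp (D n) P) <= nrm (socomp (D n) T - socomp (D n) P').
Proof.
move=> qT; pose L v := socomp (D n) (@of_rcoord R m n v).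
have L_lin a v w : L (a *: v + w) = a%:C%C *: L v + L w by rewrite /L of_rcoordP linearP.
have LB v w : L v - L w = L (v - w).
  by rewrite addrC -scaleN1r -(rmorphN1 (real_complex R)) -L_lin scaleN1r addrC.
have [K [K_ge0 LK]] := nrm_linear_bound L_lin.
pose f v := nrm (socomp (D n) T - L v).
have lip_f : {in @DI_rcoords R m n &, forall v w, `|f v - f w| <= K * `|v - w|}.
  move=> v w /set_mem [qv _] /set_mem [qw _].
  have spT v' : quantum_op (of_rcoord v') -> in_qspan (socomp (D n) T - L v').
    exact: qspan_dephase_diff.
  apply: le_trans (nrm_dist_le nrm_norm (spT v qv) (spT w qw)) _.
  have -> : socomp (D n) T - L v - (socomp (D n) T - L w) = L (w - v).
    by rewrite -LB opprB addrC addrA subrK.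
  rewrite distrC; apply: LK; rewrite -LB.
  by apply: qspanB; apply/qspan_quantum/quantum_comp => //; exact: quantum_dephase.
have DI_nonempty : @DI_rcoords R m n !=set0.
  exists (rcoord (socomp (D n) (socomp T (D m)))).
  by rewrite /DI_rcoords /= rcoordK; exact: DI_dephase_sandwich.
have [c /set_mem DI_c minc] := compact_EVT_min DI_nonempty (@compact_DI_rcoords R m n)
  (lipschitz_within_continuous K_ge0 lip_f).
exists (of_rcoord c); split => // P' DI_P'.
have := minc (rcoord P') (mem_set _); rewrite /f /L rcoordK; apply.
by rewrite /DI_rcoords /= rcoordK.
Qed.

End Minimiser.

Lemma inf_attained (R : realType) (E : set R) x : E x -> lbound E x -> inf E = x.
Proof.
move=> Ex lbx; apply/eqP; rewrite eq_le lb_le_inf ?andbT //; last by exists x.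
by apply: ge_inf Ex; exists x.
Qed.

Section DistanceToDI.
Variables (R : realType) (nrm : forall m n : nat, superop R m n -> R).
Arguments nrm : clear implicits.
Hypothesis nrm_norm : forall m n : nat, norm_on_qspan (nrm m n).
Hypothesis nrm_comp : forall (m n k : nat) (T1 : superop R n k) (T2 : superop R m n),
  in_qspan T1 -> in_qspan T2 -> nrm m k (socomp T1 T2) <= nrm n k T1 * nrm m n T2.
Hypothesis nrm_tens :
  forall (m1 n1 m2 n2 : nat) (T1 : superop R m1 n1) (T2 : superop R m2 n2),
  in_qspan T1 -> in_qspan T2 ->
  nrm (m1 * m2)%N (n1 * n2)%N (sotens T1 T2) <= nrm m1 n1 T1 * nrm m2 n2 T2.
Hypothesis nrm_DI : forall (m n : nat) (P : superop R m n), DI P -> nrm m n P <= 1.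
Local Notation D := (dephase R).
Local Notation ddist T P := (nrm _ _ (socomp (D _) T - socomp (D _) P)).

Lemma ddist_ge0 m n (T P : superop R m n) :
  quantum_op T -> quantum_op P -> 0 <= ddist T P.
Proof. by move=> qT qP; apply/nrm_ge0/qspan_dephase_diff. Qed.

Lemma dist_DI_attained m n (T : superop R m n) : quantum_op T ->
  exists P : superop R m n, DI P /\
    (forall P', DI P' -> ddist T P <= ddist T P') /\ dist_DI nrm T = ddist T P.
Proof.
move=> qT; have [P [DI_P minP]] := DI_minimiser_exists (nrm_norm m n) qT.
exists P; split=> //; split=> //; apply: inf_attained; first by exists P.
by move=> _ [P' DI_P' <-]; exact: minP.
Qed.

Lemma dist_DI_le m n (T P : superop R m n) :
  quantum_op T -> DI P -> dist_DI nrm T <= ddist T P.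
Proof. by move=> qT DI_P; have [P0 [_ [minP0 ->]]] := dist_DI_attained qT; exact: minP0. Qed.

Lemma dist_DI_ge0 m n (T : superop R m n) : quantum_op T -> 0 <= dist_DI nrm T.
Proof. by move=> qT; have [P [[qP _] [_ ->]]] := dist_DI_attained qT; exact: ddist_ge0. Qed.

Lemma dist_DI_eq0 m n (T : superop R m n) : quantum_op T -> dist_DI nrm T = 0 <-> DI T.
Proof.
move=> qT; split=> [|DI_T].
  have [P [[qP eP] [_ ->]]] := dist_DI_attained qT => /(nrm_eq0 (nrm_norm m n)).
  move=> /(_ (qspan_dephase_diff qT qP)) /eqP; rewrite subr_eq0 => /eqP DTP.
  by split=> //; rewrite DTP.
apply/eqP; rewrite eq_le dist_DI_ge0 // andbT.
by apply: le_trans (dist_DI_le qT DI_T) _; rewrite subrr nrm0.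
Qed.

Lemma dist_DI_mono m n m' n' (T : superop R m n) (T' : superop R m' n') :
  quantum_op T -> quantum_op T' ->
  (forall P, DI P -> exists2 P', DI P' & ddist T' P' <= ddist T P) ->
  dist_DI nrm T' <= dist_DI nrm T.
Proof.
move=> qT qT' better; have [P [DI_P [_ ->]]] := dist_DI_attained qT.
by have [P' DI_P' le_P'P] := better P DI_P; apply: le_trans (dist_DI_le qT' DI_P') _.
Qed.

Lemma dephase_sotens m1 n1 m2 n2 (A : superop R m1 n1) (B : superop R m2 n2) :
  socomp (D (n1 * n2)) (sotens A B) = sotens (socomp (D n1) A) (socomp (D n2) B).
Proof. by rewrite dephase_tens -sotens_comp. Qed.

Lemma dist_DI_post m n k (P : superop R n k) (T : superop R m n) :
  DI P -> quantum_op T -> dist_DI nrm (socomp P T) <= dist_DI nrm T.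
Proof.
move=> DI_P qT; have [qP DPE] := DI_P.
apply: dist_DI_mono => //; first exact: quantum_comp.
move=> P0 DI_P0; exists (socomp P P0); first exact: DI_comp.
have -> : ddist (socomp P T) (socomp P P0) =
    nrm m k (socomp (socomp (D k) P) (socomp (D n) T - socomp (D n) P0)).
  by rewrite [in RHS]linearB /= !socompA -DPE.
apply: le_trans (nrm_comp _ _) _.
- exact/qspan_quantum/(DI_dephase_comp DI_P).1.
- exact: qspan_dephase_diff DI_P0.1.
by apply: ler_piMl; [exact: ddist_ge0 DI_P0.1 | exact/nrm_DI/DI_dephase_comp].
Qed.

Lemma dist_DI_pre m n k (P : superop R k m) (T : superop R m n) :
  DI P -> quantum_op T -> dist_DI nrm (socomp T P) <= dist_DI nrm T.
Proof.
move=> DI_P qT; apply: dist_DI_mono => //; first exact: quantum_comp qT DI_P.1.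
move=> P0 DI_P0; exists (socomp P0 P); first exact: DI_comp.
rewrite !socompA -socompBl.
apply: le_trans (nrm_comp _ _) _.
- exact: qspan_dephase_diff DI_P0.1.
- exact/qspan_quantum/DI_P.1.
by apply: ler_piMr; [exact: ddist_ge0 DI_P0.1 | exact: nrm_DI].
Qed.

Lemma dist_DI_tensr m n k l (P : superop R k l) (T : superop R m n) :
  DI P -> quantum_op T -> dist_DI nrm (sotens T P) <= dist_DI nrm T.
Proof.
move=> DI_P qT; apply: dist_DI_mono => //; first exact: quantum_tens qT DI_P.1.
move=> P0 DI_P0; exists (sotens P0 P); first exact: DI_tens.
rewrite [X in X - _]dephase_sotens [X in _ - X]dephase_sotens -sotensBl.
apply: le_trans (nrm_tens _ _) _.
- exact: qspan_dephase_diff DI_P0.1.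
- exact/qspan_quantum/(DI_dephase_comp DI_P).1.
by apply: ler_piMr; [exact: ddist_ge0 DI_P0.1 | exact/nrm_DI/DI_dephase_comp].
Qed.

Lemma dist_DI_tensl m n k l (P : superop R k l) (T : superop R m n) :
  DI P -> quantum_op T -> dist_DI nrm (sotens P T) <= dist_DI nrm T.
Proof.
move=> DI_P qT; apply: dist_DI_mono => //; first exact: quantum_tens DI_P.1 qT.
move=> P0 DI_P0; exists (sotens P P0); first exact: DI_tens.
rewrite [X in X - _]dephase_sotens [X in _ - X]dephase_sotens -linearB /=.
apply: le_trans (nrm_tens _ _) _.
- exact/qspan_quantum/(DI_dephase_comp DI_P).1.
- exact: qspan_dephase_diff DI_P0.1.
by apply: ler_piMl; [exact: ddist_ge0 DI_P0.1 | exact/nrm_DI/DI_dephase_comp].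
Qed.

Lemma dist_DI_free m n m' n' (F : superop R m n -> superop R m' n') :
  free_superop F -> forall T, quantum_op T ->
  quantum_op (F T) /\ dist_DI nrm (F T) <= dist_DI nrm T.
Proof.
elim=> {m n m' n' F} [m n k P DI_P|m n k P DI_P|m n k l P DI_P|m n k l P DI_P|
    m n m' n' m'' n'' F G _ IHF _ IHG] T qT.
- by split; [exact: quantum_comp DI_P.1 qT | exact: dist_DI_post].
- by split; [exact: quantum_comp qT DI_P.1 | exact: dist_DI_pre].
- by split; [exact: quantum_tens qT DI_P.1 | exact: dist_DI_tensr].
- by split; [exact: quantum_tens DI_P.1 qT | exact: dist_DI_tensl].
have [qFT leF] := IHF T qT; have [qGFT leG] := IHG _ qFT.
by split=> //; exact: le_trans leG leF.
Qed.

Lemma normc_real (t : R) : 0 <= t -> Normc.normc (t%:C%C : R[i]) = t.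
Proof. by move=> t_ge0; rewrite /Normc.normc /= expr0n /= addr0 sqrtr_sqr ger0_norm. Qed.

Lemma dist_DI_convex m n (T S : superop R m n) (t : R) : 0 <= t <= 1 ->
  quantum_op T -> quantum_op S ->
  dist_DI nrm (t%:C%C *: T + (1 - t)%:C%C *: S) <=
  t * dist_DI nrm T + (1 - t) * dist_DI nrm S.
Proof.
move=> t01 qT qS; have /andP[t_ge0 t_le1] := t01.
have [PT [DI_PT [_ ->]]] := dist_DI_attained qT; have [PS [DI_PS [_ ->]]] := dist_DI_attained qS.
apply: le_trans (dist_DI_le (quantum_conv t01 qT qS) (DI_conv t01 DI_PT DI_PS)) _.
rewrite !linearD !linearZ /= addrACA -!scalerDr.
have spT := qspan_dephase_diff qT DI_PT.1; have spS := qspan_dephase_diff qS DI_PS.1.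
apply: le_trans (nrmD (nrm_norm m n) (qspanZ _ spT) (qspanZ _ spS)) _.
by rewrite !nrmZ // !normc_real // subr_ge0.
Qed.

End DistanceToDI.

Theorem proposition7 (R : realType) (nrm : forall m n : nat, superop R m n -> R)
  (Hnorm : forall m n : nat, norm_on_qspan (nrm m n))
  (Hcomp : forall (m n k : nat) (T1 : superop R n k) (T2 : superop R m n),
      in_qspan T1 -> in_qspan T2 ->
      nrm m k (socomp T1 T2) <= nrm n k T1 * nrm m n T2)
  (Htens : forall (m1 n1 m2 n2 : nat) (T1 : superop R m1 n1) (T2 : superop R m2 n2),
      in_qspan T1 -> in_qspan T2 ->
      nrm (m1 * m2)%N (n1 * n2)%N (sotens T1 T2) <= nrm m1 n1 T1 * nrm m2 n2 T2)
  (HDI : forall (m n : nat) (P : superop R m n), DI P -> nrm m n P <= 1) :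
  (* the minimum defining M is attained *)
  (forall (m n : nat) (T : superop R m n), quantum_op T ->
     exists P : superop R m n, DI P /\
       (forall P' : superop R m n, DI P' ->
          nrm m n (socomp (dephase R n) T - socomp (dephase R n) P)
          <= nrm m n (socomp (dephase R n) T - socomp (dephase R n) P')) /\
       dist_DI nrm T = nrm m n (socomp (dephase R n) T - socomp (dephase R n) P))
  /\ DI_measure (dist_DI nrm).
Proof.
split; first exact: dist_DI_attained.
split; first exact: dist_DI_ge0.
split; first exact: dist_DI_eq0.
split; first by move=> m n m' n' F T freeF qT; exact: (dist_DI_free Hnorm Hcomp Htens HDI freeF qT).2.
exact: dist_DI_convex.
Qed.
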